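(* For every integer $\Delta\geq 1$, the symmetric directed star $\overleftrightarrow{K_{1,\Delta}}$ satisfies $$\chi'_{D_{1,2}}(\overleftrightarrow{K_{1,\Delta}}) = \left\lceil 2\sqrt{\Delta}\right\rceil.$$
   Context: For a simple graph $G$, the symmetric digraph $\overleftrightarrow{G}$ is obtained by replacing each edge $uv$ of $G$ by the pair of opposite arcs $\overrightarrow{uv}$ and $\overrightarrow{vu}$. An arc-colouring is proper of type I if any two consecutive arcs $\overrightarrow{uv},\overrightarrow{vw}$ (including $w=u$) receive distinct colours, i.e. no monochromatic 2-cycles and no monochromatic 2-paths. An arc-colouring is distinguishing if the only automorphism of $\overleftrightarrow{G}$ preserving the colour of every arc is the identity. $\chi'_{D_{1,2}}(\overleftrightarrow{G})$ is the least number of colours in a distinguishing proper arc-colouring of type I of $\overleftrightarrow{G}$. *)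

From mathcomp Require Import all_boot all_order all_algebra all_fingroup.
From mathcomp Require Import reals.
Set Implicit Arguments. Unset Strict Implicit. Unset Printing Implicit Defensive.

(* A simple graph on a finite vertex type V is a symmetric irreflexive
   relation e.  Its symmetric digraph has arc set {(u,v) | e u v}. *)
Definition simple_graph (V : finType) (e : rel V) : Prop :=
  (forall x, ~~ e x x) /\ (forall x y, e x y = e y x).

Definition arc (V : finType) (e : rel V) (u v : V) : bool := e u v.

(* An arc-colouring with k colours (only values on arcs matter). *)
Definition arc_colouring (V : finType) (k : nat) := V -> V -> 'I_k.

(* Proper of type I: consecutive arcs uv, vw (w = u allowed) get distinct
   colours. *)
Definition proper_typeI (V : finType) (e : rel V) k (c : arc_colouring V k) :=
  forall u v w, arc e u v -> arc e v w -> c u v != c v w.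

Definition digraph_aut (V : finType) (e : rel V) (s : {perm V}) :=
  forall u v, arc e (s u) (s v) = arc e u v.

Definition distinguishing (V : finType) (e : rel V) k (c : arc_colouring V k) :=
  forall s : {perm V}, digraph_aut e s ->
    (forall u v, arc e u v -> c (s u) (s v) = c u v) -> s = 1%g.

Definition has_DPI_colouring (V : finType) (e : rel V) (k : nat) :=
  exists c : arc_colouring V k, proper_typeI e c /\ distinguishing e c.

Definition is_chiD12 (V : finType) (e : rel V) (n : nat) :=
  has_DPI_colouring e n /\ forall k, k < n -> ~ has_DPI_colouring e k.

(* The star K_{1,Delta}: vertex set 'I_Delta.+1, centre ord0, edges
   between the centre and each other vertex. *)
Definition star_rel (D : nat) : rel 'I_D.+1 :=
  fun x y => ((x == ord0) && (y != ord0)) || ((y == ord0) && (x != ord0)).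
Arguments star_rel D x y : clear implicits.

From Pilot Require Import Defs.
From mathcomp Require Import all_boot all_order all_algebra all_fingroup.
From mathcomp Require Import reals.
From mathcomp Require Import zify.
Import Order.TTheory GRing.Theory Num.Theory.

(* Give the arc from the centre to a leaf an "out-colour" and the arc back an
   "in-colour".  Properness forces the sets of out- and in-colours to be
   disjoint, and since the transposition of two leaves is an automorphism, a
   distinguishing colouring must give distinct leaves distinct (out, in) pairs.
   Conversely, any injective labelling of the leaves by pairs from two disjoint
   palettes is such a colouring.  So k colours suffice iff D <= p q for some
   p + q <= k, which by AM-GM happens iff 4 D <= k^2, i.e. iff
   k >= ceil (2 sqrt D). *)

Lemma sum_le_prod_ge_iff (D k : nat) :
  (exists p q, p + q <= k /\ D <= p * q) <-> 4 * D <= k ^ 2.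
Proof.
split=> [[p [q [pq_le_k D_le_pq]]] | D4_le_k2].
  have [AGM _] := nat_AGM2 p q.
  by rewrite (leq_trans (leq_mul (leqnn 4) D_le_pq)) // (leq_trans AGM) ?leq_sqr.
exists k./2, (k - k./2); split; first by have := odd_double_half k; lia.
have := odd_double_half k; nia.
Qed.

Lemma abs_ceil_le_iff_sqr {R : archiRealDomainType} {x : R} {m : nat} (k : nat) :
  (0 <= x)%R -> (x ^+ 2 = m%:R)%R -> (`|Num.ceil x|%N <= k) = (m <= k ^ 2).
Proof.
move=> x_ge0 x2m.
have ceilx_ge0 : (0 <= Num.ceil x)%R by rewrite ceil_ge0 (lt_le_trans _ x_ge0) ?ltrN10.
rewrite -lez_nat gez0_abs // ceil_le_int -(ler_nat R) natrX -x2m.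
by rewrite ler_pXn2r // nnegrE.
Qed.

Lemma star_rel_centre (D : nat) (v : 'I_D.+1) : star_rel D ord0 v = (v != ord0).
Proof. by rewrite /star_rel eqxx andbF orbF. Qed.

Lemma star_rel_sym (D : nat) : symmetric (star_rel D).
Proof. by move=> u v; rewrite /star_rel orbC. Qed.

Lemma star_rel_leaves (D : nat) (u v : 'I_D.+1) :
  u != ord0 -> v != ord0 -> star_rel D u v = false.
Proof. by rewrite /star_rel => /negbTE-> /negbTE->. Qed.

Lemma star_aut {D : nat} (s : {perm 'I_D.+1}) :
  s ord0 = ord0 -> digraph_aut (star_rel D) s.
Proof.
move=> s0 u v.
have fix0 w : (s w == ord0) = (w == ord0) by rewrite -{1}s0 (inj_eq perm_inj).
by rewrite /Defs.arc /star_rel !fix0.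
Qed.

Section StarLowerBound.

Variables (D k : nat) (c : arc_colouring 'I_D.+1 k).
Hypotheses (c_proper : proper_typeI (star_rel D) c)
           (c_dist : distinguishing (star_rel D) c).

Definition star_out_colours := [set c ord0 (lift ord0 m) | m : 'I_D].
Definition star_in_colours := [set c (lift ord0 m) ord0 | m : 'I_D].
Definition star_colour_pair (m : 'I_D) := (c ord0 (lift ord0 m), c (lift ord0 m) ord0).

Lemma star_out_in_colours_disjoint : [disjoint star_out_colours & star_in_colours].
Proof.
apply/pred0P => a /=; apply/negbTE/andP.
case=> /imsetP[m1 _ ->] /imsetP[m2 _ /esym out_eq_in].
have leaf m : lift ord0 m != ord0 :> 'I_D.+1 by rewrite eq_sym neq_lift.
have := c_proper (lift ord0 m2) ord0 (lift ord0 m1).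
rewrite out_eq_in eqxx /Defs.arc star_rel_centre star_rel_sym star_rel_centre !leaf.
by move=> /(_ isT isT).
Qed.

Lemma star_colour_pair_inj : injective star_colour_pair.
Proof.
move=> m1 m2 [out_eq in_eq]; have [// | m1_neq_m2] := eqVneq m1 m2.
pose s := tperm (lift ord0 m1 : 'I_D.+1) (lift ord0 m2).
have s0 : s ord0 = ord0 by rewrite tpermD // neq_lift.
have keep_colours u v : Defs.arc (star_rel D) u v -> c (s u) (s v) = c u v.
  rewrite /Defs.arc /star_rel => /orP[] /andP[/eqP-> _]; rewrite s0.
    by case: tpermP => [->|->|//]; rewrite ?out_eq.
  by case: tpermP => [->|->|//]; rewrite ?in_eq.
have := congr1 (fun t : {perm _} => t (lift ord0 m1)) (c_dist s (star_aut s s0) keep_colours).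
by rewrite tpermL perm1 => /lift_inj.
Qed.

Lemma star_DPI_colouring_sum_prod : exists p q, p + q <= k /\ D <= p * q.
Proof.
exists #|star_out_colours|, #|star_in_colours|; split.
  have [_] := leq_card_setU star_out_colours star_in_colours.
  rewrite star_out_in_colours_disjoint => /eqP <-.
  exact: leq_trans (max_card _) (eq_leq (card_ord k)).
rewrite -cardsX -[D in D <= _]card_ord -(card_image star_colour_pair_inj).
apply/subset_leq_card/subsetP => _ /imageP[m _ ->].
by rewrite in_setX !imset_f.
Qed.

End StarLowerBound.

Lemma has_DPI_colouring_widen (V : finType) (e : rel V) (k k' : nat) :
  k <= k' -> has_DPI_colouring e k -> has_DPI_colouring e k'.
Proof.
move=> le_kk' [c [proper dist]].
exists (fun u v => widen_ord le_kk' (c u v)); split.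
  by move=> u v w uv vw; rewrite -val_eqE /= val_eqE proper.
by move=> s aut keep; apply: (dist s aut) => u v /keep/(congr1 val) /= /val_inj.
Qed.

Section StarUpperBound.

Context {D p q : nat} (f : 'I_D.+1 -> 'I_p * 'I_q).
Hypothesis f_inj : injective f.

(* The value at the centre is irrelevant; the default needs a leaf, hence the
   star with D.+1 leaves. *)
Definition leaf_index (v : 'I_D.+2) : 'I_D.+1 := odflt ord0 (unlift ord0 v).

Lemma lift_leaf_index (v : 'I_D.+2) : v != ord0 -> lift ord0 (leaf_index v) = v.
Proof. by rewrite eq_sym => /unlift_some[m ->]; rewrite /leaf_index liftK. Qed.

Definition star_pair_colouring : arc_colouring 'I_D.+2 (p + q) := fun u v =>
  if u == ord0 then lshift q (f (leaf_index v)).1 else rshift p (f (leaf_index u)).2.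

Lemma star_pair_colouring_proper : proper_typeI (star_rel D.+1) star_pair_colouring.
Proof.
move=> u v w; rewrite /Defs.arc /star_pair_colouring.
have [-> | u0] := eqVneq u ord0.
  rewrite star_rel_centre => v0; rewrite (negbTE v0) star_rel_sym.
  have [-> | w0] := eqVneq w ord0; first by rewrite eq_lrshift.
  by rewrite star_rel_leaves.
rewrite star_rel_sym; have [-> _ | v0] := eqVneq v ord0.
  by rewrite star_rel_centre eq_rlshift.
by rewrite star_rel_leaves.
Qed.

Lemma star_pair_colouring_distinguishing :
  distinguishing (star_rel D.+1) star_pair_colouring.
Proof.
move=> s _ keep.
have arc0 v : v != ord0 -> Defs.arc (star_rel D.+1) ord0 v.
  by rewrite /Defs.arc star_rel_centre.
(* Only arcs leaving the centre carry colours of the first palette. *)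
have s0 : s ord0 = ord0.
  have [// | s0_leaf] := eqVneq (s ord0) ord0.
  have /eqP := keep _ _ (arc0 _ s0_leaf).
  by rewrite /star_pair_colouring eqxx (negbTE s0_leaf) eq_rlshift.
apply/permP => x; rewrite perm1; have [-> // | x0] := eqVneq x ord0.
have sx0 : s x != ord0 by rewrite -{1}s0 (inj_eq perm_inj).
have := keep _ _ (arc0 _ x0); have := keep x ord0.
rewrite /Defs.arc star_rel_sym star_rel_centre s0 => /(_ x0).
rewrite /star_pair_colouring eqxx (negbTE x0) (negbTE sx0).
move=> /rshift_inj in_eq /lshift_inj out_eq.
have /f_inj : f (leaf_index (s x)) = f (leaf_index x).
  exact: injective_projections out_eq in_eq.
by move=> /(congr1 (lift ord0)); rewrite !lift_leaf_index.
Qed.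

End StarUpperBound.

Lemma star_DPI_colouring_iff (D k : nat) :
  has_DPI_colouring (star_rel D.+1) k <-> exists p q, p + q <= k /\ D.+1 <= p * q.
Proof.
split=> [[c [proper dist]] | [p [q [pq_le_k D_le_pq]]]].
  exact: star_DPI_colouring_sum_prod proper dist.
have card_pairs : D.+1 <= #|{: 'I_p * 'I_q}| by rewrite card_prod !card_ord.
pose f (m : 'I_D.+1) : 'I_p * 'I_q := enum_val (widen_ord card_pairs m).
have f_inj : injective f by move=> m1 m2 /enum_val_inj/(congr1 val) /= /val_inj.
apply: has_DPI_colouring_widen pq_le_k _; exists (star_pair_colouring f); split.
  exact: star_pair_colouring_proper.
exact: star_pair_colouring_distinguishing.
Qed.

Theorem proposition2p4 (R : realType) (D : nat) : (1 <= D)%N ->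
  is_chiD12 (star_rel D) `|Num.ceil (2 * Num.sqrt (D%:R : R))%R|%N.
Proof.
case: D => [//|D] _; set n := `|_|%N.
have two_sqrt_sqr : ((2 * Num.sqrt (D.+1%:R : R)) ^+ 2 = (4 * D.+1)%:R)%R.
  by rewrite exprMn sqr_sqrtr ?ler0n // -natrX -natrM.
have colourable k : has_DPI_colouring (star_rel D.+1) k <-> (n <= k)%N.
  rewrite (abs_ceil_le_iff_sqr k _ two_sqrt_sqr) ?mulr_ge0 ?sqrtr_ge0 //.
  exact: iff_trans (star_DPI_colouring_iff D k) (sum_le_prod_ge_iff _ _).
split; first exact/colourable.
by move=> k k_lt_n /colourable; rewrite leqNgt k_lt_n.
Qed.
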